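(* Let $\breve f\colon\{0,\dots,n\}\to\mathbb{Q}$ and $\breve g\colon\{0,\dots,m\}\to\mathbb{Q}$ be convex, $\breve h$ their min-plus convolution, and $\delta\ge0$. For each $k\in\{0,\dots,n+m\}$ let $(i^+_k,k-i^+_k)\in P^+_\delta$ and $(i^-_k,k-i^-_k)\in P^-_\delta$ be the points of these paths on diagonal $k$. Then the set $R_\delta$ of $\delta$-relevant points is exactly the set of points $(i,k-i)$ with $k\in\{0,\dots,n+m\}$ and $i^-_k\le i\le i^+_k$ (i.e., the points on or below $P^+_\delta$ and on or above $P^-_\delta$).
   Context: Convex means $F(i)-F(i-1)\le F(i+1)-F(i)$ for all interior $i$. $\breve h(k)=\min_{i+j=k}\breve f(i)+\breve g(j)$. A point is a pair $(i,j)\in\{0,\dots,n\}\times\{0,\dots,m\}$ on diagonal $i+j$; it is $\delta$-relevant if $\breve f(i)+\breve g(j)\le\breve h(i+j)+\delta$. $P^+_\delta$ (resp. $P^-_\delta$) is the set of points $(i,k-i)$, $k\in\{0,\dots,n+m\}$, where $i$ is maximal (resp. minimal) such that $(i,k-i)$ is a $\delta$-relevant point. *)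

From mathcomp Require Import all_boot all_order all_algebra.
Set Implicit Arguments. Unset Strict Implicit. Unset Printing Implicit Defensive.
Import Order.TTheory GRing.Theory Num.Theory.
Local Open Scope ring_scope.

(* A function F : {0..N} -> Q, represented as F : nat -> rat (values beyond N
   are irrelevant), is convex if F(i)-F(i-1) <= F(i+1)-F(i) for 0 < i < N. *)
Definition convex_on (N : nat) (F : nat -> rat) : Prop :=
  forall i : nat, (0 < i)%N -> (i < N)%N -> F i - F i.-1 <= F i.+1 - F i.

Definition valid_point (n m k i : nat) : bool :=
  [&& (i <= k)%N, (i <= n)%N & (k - i <= m)%N].

(* min-plus convolution h(k) = min_{i+j=k, i<=n, j<=m} f(i) + g(j), for k <= n+m.
   The seed value corresponds to the valid point (k - minn k m, minn k m). *)
Definition minplus_conv (n m : nat) (f g : nat -> rat) (k : nat) : rat :=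
  \big[Num.min/(f (k - minn k m)%N + g (minn k m))]_(i < n.+1 | valid_point n m k i)
     (f i + g (k - i)%N).

Definition relevant (n m : nat) (f g : nat -> rat) (delta : rat) (k i : nat) : Prop :=
  valid_point n m k i /\ f i + g (k - i)%N <= minplus_conv n m f g k + delta.

(* i is maximal (resp. minimal) such that (i, k-i) is delta-relevant:
   this is the point of P^+_delta (resp. P^-_delta) on diagonal k. *)
Definition is_Pplus (n m : nat) (f g : nat -> rat) (delta : rat) (k i : nat) : Prop :=
  relevant n m f g delta k i /\ forall i', relevant n m f g delta k i' -> (i' <= i)%N.
Definition is_Pminus (n m : nat) (f g : nat -> rat) (delta : rat) (k i : nat) : Prop :=
  relevant n m f g delta k i /\ forall i', relevant n m f g delta k i' -> (i <= i')%N.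

From mathcomp Require Import all_boot all_order all_algebra.
From mathcomp Require Import zify lra.
Import Order.TTheory GRing.Theory Num.Theory.
Local Open Scope ring_scope.

(* On a fixed diagonal k the cost  j |-> f j + g (k - j)  of the
   point (j, k - j) is a sum of two convex sequences (the second one read
   backwards), hence convex on the range of valid indices [k - m, min k n].
   A convex sequence is quasi-convex: its value at i never exceeds the larger
   of its values at any x <= i and y >= i, because it is either nondecreasing
   from i on or nonincreasing up to i.  Consequently the delta-relevant points
   of a diagonal, i.e. the sublevel set {j | cost j <= h k + delta}, form an
   interval of indices.  Its endpoints are by definition the points of
   P^-_delta and P^+_delta, which gives the characterisation of R_delta. *)

Definition increment (phi : nat -> rat) (j : nat) : rat := phi j.+1 - phi j.

Section ConvexSequence.
Variables (phi : nat -> rat) (lo hi : nat).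

Hypothesis phi_convex :
  forall j, (lo <= j)%N -> (j.+2 <= hi)%N -> increment phi j <= increment phi j.+1.

Lemma increment_mono j l :
  (lo <= j)%N -> (j <= l)%N -> (l.+1 <= hi)%N -> increment phi j <= increment phi l.
Proof.
move=> loj; elim: l => [|l IHl] jl lhi; first by have -> : j = 0%N by lia.
have [jl' | ] := leqP j l; last by move=> lj; have -> : j = l.+1 by lia.
by apply: le_trans (IHl jl' _) (phi_convex _ _ _); lia.
Qed.

Lemma convex_nondecreasing_from i y :
  (lo <= i)%N -> (i <= y)%N -> (y <= hi)%N -> 0 <= increment phi i ->
  phi i <= phi y.
Proof.
move=> loi; elim: y => [|y IHy] iy yhi inc_ge0; first by have -> : i = 0%N by lia.
have [iy' | ] := leqP i y; last by move=> yi; have -> : i = y.+1 by lia.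
have inc_y := @increment_mono i y loi iy' yhi.
have phi_y := IHy iy' (ltnW yhi) inc_ge0.
rewrite /increment in inc_y inc_ge0; lra.
Qed.

Lemma convex_nonincreasing_to i x :
  (lo <= x)%N -> (x <= i)%N -> (i < hi)%N -> increment phi i < 0 ->
  phi i <= phi x.
Proof.
move=> lox xi ihi inc_lt0.
suff back c : (c <= i - x)%N -> phi i <= phi (i - c).
  by have := back (i - x)%N (leqnn _); rewrite subKn.
elim: c => [|c IHc] ci; first by rewrite subn0.
have phi_c := IHc (ltnW ci).
have inc_c := @increment_mono (i - c.+1) i ltac:(lia) ltac:(lia) ihi.
have shift : (i - c = (i - c.+1).+1)%N by lia.
rewrite shift in phi_c.
rewrite /increment in inc_c inc_lt0; lra.
Qed.

Lemma convex_quasiconvex x i y :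
  (lo <= x)%N -> (x <= i)%N -> (i <= y)%N -> (y <= hi)%N ->
  phi i <= Num.max (phi x) (phi y).
Proof.
move=> lox xi iy yhi; rewrite le_max.
have [yi | iy'] := leqP y i.
  have -> : i = y by lia.
  by rewrite lexx orbT.
have [inc_ge0 | inc_lt0] := lerP 0 (increment phi i).
  by rewrite (@convex_nondecreasing_from i y _ iy yhi inc_ge0) ?orbT //; lia.
by rewrite (@convex_nonincreasing_to i x lox xi _ inc_lt0) //; lia.
Qed.

End ConvexSequence.

Definition diag_cost (f g : nat -> rat) (k j : nat) : rat := f j + g (k - j)%N.

Lemma diag_cost_convex (n m : nat) (f g : nat -> rat) (k : nat) :
  convex_on n f -> convex_on m g ->
  forall j, (k - m <= j)%N -> (j.+2 <= minn k n)%N ->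
  increment (diag_cost f g k) j <= increment (diag_cost f g k) j.+1.
Proof.
move=> f_convex g_convex j kmj jkn; rewrite /increment /diag_cost.
have f_j := f_convex j.+1 ltac:(lia) ltac:(lia).
have g_j := g_convex (k - j.+1)%N ltac:(lia) ltac:(lia).
have prev : (k - j.+1).-1 = (k - j.+2)%N by lia.
have next : (k - j.+1).+1 = (k - j)%N by lia.
rewrite prev next in g_j.
rewrite /= in f_j; lra.
Qed.

Lemma valid_point_diag {n m k i : nat} : valid_point n m k i -> (k <= n + m)%N.
Proof. by rewrite /valid_point; lia. Qed.

Lemma relevant_between {n m : nat} {f g : nat -> rat} {delta : rat} {k x i y : nat} :
  convex_on n f -> convex_on m g ->
  relevant n m f g delta k x -> relevant n m f g delta k y ->
  valid_point n m k i -> (x <= i <= y)%N ->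
  relevant n m f g delta k i.
Proof.
move=> f_convex g_convex [vx cost_x] [vy cost_y] vi /andP[xi iy]; split=> //.
move: vx vy; rewrite /valid_point => vx vy.
have := @convex_quasiconvex _ _ _ (@diag_cost_convex n m f g k f_convex g_convex) x i y.
rewrite le_max /diag_cost => /(_ ltac:(lia) xi iy ltac:(lia)) /orP[] cost_i.
- exact: le_trans cost_i cost_x.
- exact: le_trans cost_i cost_y.
Qed.

Theorem mainTheorem13 (n m : nat) (f g : nat -> rat) (delta : rat)
  (ip im : nat -> nat) :
  convex_on n f -> convex_on m g -> 0 <= delta ->
  (forall k, (k <= n + m)%N -> is_Pplus n m f g delta k (ip k)) ->
  (forall k, (k <= n + m)%N -> is_Pminus n m f g delta k (im k)) ->
  forall k i : nat,
    relevant n m f g delta k i <->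
    [/\ (k <= n + m)%N, valid_point n m k i & (im k <= i <= ip k)%N].
Proof.
move=> f_convex g_convex _ Pplus Pminus k i; split.
- move=> rel_i; have [vi _] := rel_i; have kb := valid_point_diag vi.
  by split=> //; rewrite (Pminus k kb).2 ?(Pplus k kb).2.
- case=> kb vi between.
  exact: relevant_between f_convex g_convex (Pminus k kb).1 (Pplus k kb).1 vi between.
Qed.
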